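(* Let $K_1,K_2$ be finite simplicial complexes on disjoint vertex sets, $k\ge 2$, and $K=K_1\vee_kK_2$ a $k$-wedge sum. If $0\le i\le k-2$, then $B_i(K)$ is unbalanced.
   Context: $S_j(K)$ is the set of faces of cardinality $j+1$. The $k$-wedge sum $K_1\vee_kK_2$ is obtained from $K_1\cup K_2$ by identifying a $k$-face $\{v_0,\dots,v_k\}$ of $K_1$ with a $k$-face $\{u_0,\dots,u_k\}$ of $K_2$ via $v_j\mapsto u_j$. For an oriented complex $K$, $B_i(K)$ is the signed bipartite graph on $S_i(K)\cup S_{i+1}(K)$ with edges $\{G,\bar G\}$ for $G\subset\bar G$, signed by the boundary incidence sign $\mathrm{sgn}([G],\partial[\bar G])\in\{\pm1\}$ ($(-1)^j$ if $G$ is $\bar G$ minus its $j$-th vertex with agreeing orientation, negated otherwise). A signed graph is balanced if every cycle has positive sign product. *)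

From mathcomp Require Import all_boot all_order all_algebra.
Set Implicit Arguments. Unset Strict Implicit. Unset Printing Implicit Defensive.
Import GRing.Theory.
Local Open Scope ring_scope.

Definition simplicial_complex (V : finType) (K : {set {set V}}) : Prop :=
  forall F G : {set V}, F \in K -> G \subset F -> G \in K.

Definition S_ (V : finType) (K : {set {set V}}) (j : nat) : {set {set V}} :=
  [set F in K | #|F| == j.+1]%N.

(* k-wedge sum, up to the naming of vertices: W contains copies phi1(V1),
   phi2(V2) which meet exactly in phi1(s1) = phi2(s2), where s1, s2 are
   k-faces of K1, K2 (the identification v_j |-> u_j is u_j = phi2^-1(phi1 v_j)),
   and K is the union of the images of K1 and K2. *)
Definition k_wedge_sum (V1 V2 W : finType) (k : nat)
    (K1 : {set {set V1}}) (K2 : {set {set V2}}) (K : {set {set W}}) : Prop :=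
  exists (phi1 : V1 -> W) (phi2 : V2 -> W) (s1 : {set V1}) (s2 : {set V2}),
    [/\ injective phi1, injective phi2,
        s1 \in S_ K1 k & s2 \in S_ K2 k] /\
    [/\ phi1 @: s1 = phi2 @: s2,
        (forall x y, phi1 x = phi2 y -> x \in s1) &
        K = ((fun F : {set V1} => phi1 @: F) @: K1) :|: ((fun G : {set V2} => phi2 @: G) @: K2)].

(* Vertices are compared via enum_rank; the standard orientation
   of a face lists its vertices increasingly.  An arbitrary orientation of the
   complex is given by eps : {set V} -> bool (eps F = true iff the orientation
   of F is opposite to the standard one). *)
Definition pos_in (V : finType) (F : {set V}) (v : V) : nat :=
  #|[set u in F | (enum_rank u < enum_rank v)%N]|.

(* sgn([G], boundary [Gb]) for G = Gb minus one vertex v: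
   (-1)^j with j the position of v in Gb, corrected by the orientations. *)
Definition incidence_sign (V : finType) (eps : {set V} -> bool)
    (G Gb : {set V}) : int :=
  (-1) ^+ (eps G + eps Gb +
           (if [pick v in Gb :\: G] is Some v then pos_in Gb v else 0))%N.

Definition cycle_sign (T : eqType) (sgn : T -> T -> int) (c : seq T) : int :=
  \prod_(p <- zip c (rot 1 c)) sgn p.1 p.2.

Definition balanced (T : eqType) (adj : rel T) (sgn : T -> T -> int) : Prop :=
  forall c : seq T, uniq c -> (3 <= size c)%N -> cycle adj c ->
    cycle_sign sgn c = 1.

Definition B_adj (V : finType) (K : {set {set V}}) (i : nat) : rel {set V} :=
  fun x y =>
    ((x \in S_ K i) && (y \in S_ K i.+1) && (x \subset y)) ||
    ((y \in S_ K i) && (x \in S_ K i.+1) && (y \subset x)).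

Definition B_sign (V : finType) (eps : {set V} -> bool) (x y : {set V}) : int :=
  if (#|x| < #|y|)%N then incidence_sign eps x y else incidence_sign eps y x.

Definition B_balanced (V : finType) (K : {set {set V}}) (i : nat)
    (eps : {set V} -> bool) : Prop :=
  balanced (B_adj K i) (B_sign eps).

From mathcomp Require Import all_boot all_order all_algebra.
From mathcomp Require Import zify ring.
Set Implicit Arguments. Unset Strict Implicit. Unset Printing Implicit Defensive.
Import GRing.Theory.
Local Open Scope ring_scope.

(* The common k-face of a k-wedge sum spans a full simplex of K, so it suffices
   to find an unbalanced cycle of B_i inside a simplex with at least i + 3
   vertices.  Take three vertices a, b, c outside an i-element set A of the
   simplex: the six faces a+A, a+b+A, b+A, b+c+A, c+A, c+a+A form a hexagon in
   B_i.  Around each (i+1)-face x+y+A the two incidence signs multiply to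
   -s(x) s(y), where s(x) only depends on x+A: exactly one of x, y precedes the
   other, so exactly one of their positions is shifted by one.  Around the
   hexagon every s(x) occurs twice, so the hexagon has sign (-1)^3. *)

Section Hexagon.
Variable W : finType.

Definition hexagon (a b c : W) (A : {set W}) : seq {set W} :=
  [:: a |: A; a |: (b |: A); b |: A; b |: (c |: A); c |: A; c |: (a |: A)].

Lemma hexagon_uniq (a b c : W) (A : {set W}) :
  a \notin A -> b \notin A -> c \notin A -> [&& a != b, b != c & c != a] ->
  uniq (hexagon a b c A).
Proof.
move=> aA bA cA /and3P [ab bc ca].
have ba : b != a by rewrite eq_sym.
have cb : c != b by rewrite eq_sym.
have ac : a != c by rewrite eq_sym.
apply: (@map_uniq _ _ (fun X : {set W} => (a \in X, b \in X, c \in X))).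
by rewrite [map _ _]/= !inE !eqxx (negbTE aA) (negbTE bA) (negbTE cA) (negbTE ab)
  (negbTE bc) (negbTE ca) (negbTE ba) (negbTE cb) (negbTE ac).
Qed.

End Hexagon.

Section IncidenceSigns.
Variables (W : finType) (eps : {set W} -> bool).

Lemma pos_in_setU1 (A : {set W}) v u : v \notin A ->
  pos_in (v |: A) u = (pos_in A u + (enum_rank v < enum_rank u))%N.
Proof.
move=> vA; rewrite /pos_in.
have vNA : v \notin [set w in A | (enum_rank w < enum_rank u)%N].
  by rewrite inE (negbTE vA).
case ltvu: (enum_rank v < enum_rank u)%N.
- have -> : [set w in v |: A | (enum_rank w < enum_rank u)%N] =
            v |: [set w in A | (enum_rank w < enum_rank u)%N].
    by apply/setP=> w; rewrite !inE; case: eqP => [->|].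
  by rewrite cardsU1 vNA addnC.
- have -> : [set w in v |: A | (enum_rank w < enum_rank u)%N] =
            [set w in A | (enum_rank w < enum_rank u)%N].
    by apply/setP=> w; rewrite !inE; case: eqP => [->|]; rewrite ?ltvu ?andbF.
  by rewrite addn0.
Qed.

Lemma incidence_sign_setU1 (A : {set W}) x : x \notin A ->
  incidence_sign eps A (x |: A) =
  (-1) ^+ (eps A + eps (x |: A) + pos_in (x |: A) x)%N.
Proof.
move=> xA; rewrite /incidence_sign.
have -> : (x |: A) :\: A = [set x].
  by apply/setP=> w; rewrite !inE; case: eqP => [->|_] /=; rewrite ?xA ?andNb.
by case: pickP => [v /set1P -> //|/(_ x)]; rewrite set11.
Qed.

Lemma enum_rank_ltNgt (x y : W) : x != y ->
  (enum_rank y < enum_rank x)%N = ~~ (enum_rank x < enum_rank y)%N.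
Proof.
move=> xy; rewrite ltnNge leq_eqVlt.
suff /negbTE -> : nat_of_ord (enum_rank x) != enum_rank y by [].
by apply: contra xy => /eqP /val_inj /enum_rank_inj ->.
Qed.

Definition vertex_sign (A : {set W}) (x : W) : int :=
  (-1) ^+ (eps (x |: A) + pos_in A x)%N.

Lemma incidence_sign_square (A : {set W}) x y :
  x \notin A -> y \notin A -> x != y ->
  incidence_sign eps (x |: A) (x |: (y |: A)) *
  incidence_sign eps (y |: A) (x |: (y |: A)) =
  - (vertex_sign A x * vertex_sign A y).
Proof.
move=> xA yA xy.
have xyA : x \notin y |: A by rewrite !inE negb_or xy.
have yxA : y \notin x |: A by rewrite !inE negb_or eq_sym xy.
rewrite setUCA incidence_sign_setU1 // -setUCA incidence_sign_setU1 //.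
rewrite !pos_in_setU1 // !ltnn !addn0 (enum_rank_ltNgt xy) /vertex_sign.
rewrite -!exprD -signr_odd -[in RHS]signr_odd !oddD !oddb.
by move: (eps _) (eps _) (eps _) (odd _) (odd _) (_ < _)%N; do !case.
Qed.

Lemma B_signE (x y : {set W}) : (#|x| < #|y|)%N ->
  B_sign eps x y = incidence_sign eps x y.
Proof. by rewrite /B_sign => ->. Qed.

Lemma B_signC (x y : {set W}) : #|x| != #|y| -> B_sign eps x y = B_sign eps y x.
Proof. by rewrite /B_sign; case: ltngtP. Qed.

(* The tail [r] lets this rewrite inside the right-nested product of [cycle_sign]. *)
Lemma B_sign_square (A : {set W}) x y (r : int) :
  x \notin A -> y \notin A -> x != y ->
  B_sign eps (x |: A) (x |: (y |: A)) * (B_sign eps (x |: (y |: A)) (y |: A) * r) =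
  - (vertex_sign A x * vertex_sign A y) * r.
Proof.
move=> xA yA xy.
have cardU1 z : z \notin A -> #|z |: A| = #|A|.+1 by move=> zA; rewrite cardsU1 zA.
have cardU2 : #|x |: (y |: A)| = #|A|.+2.
  by rewrite cardsU1 !inE negb_or xy xA cardU1.
have ltx : (#|x |: A| < #|x |: (y |: A)|)%N by rewrite cardU2 cardU1.
have lty : (#|y |: A| < #|x |: (y |: A)|)%N by rewrite cardU2 cardU1.
rewrite mulrA B_signE // B_signC ?B_signE ?(gtn_eqF lty) //.
by rewrite incidence_sign_square.
Qed.

Lemma hexagon_cycle_sign (a b c : W) (A : {set W}) :
  a \notin A -> b \notin A -> c \notin A -> [&& a != b, b != c & c != a] ->
  cycle_sign (B_sign eps) (hexagon a b c A) = -1.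
Proof.
move=> aA bA cA /and3P [ab bc ca].
rewrite /cycle_sign /= !big_cons big_nil ![(_, _).1]/= ![(_, _).2]/=.
rewrite !B_sign_square // mulr1.
have sq x : vertex_sign A x * vertex_sign A x = 1 by rewrite -expr2 sqrr_sign.
set sa := vertex_sign A a; set sb := vertex_sign A b; set sc := vertex_sign A c.
have -> : - (sa * sb) * (- (sb * sc) * - (sc * sa)) =
          - ((sa * sa) * (sb * sb) * (sc * sc)) by ring.
by rewrite !sq !mulr1.
Qed.

End IncidenceSigns.

Section HexagonInSimplex.
Variables (W : finType) (K : {set {set W}}) (i : nat) (F : {set W}).
Hypothesis subsets_in_K : forall G : {set W}, G \subset F -> G \in K.

Lemma B_adj_sub (x y : {set W}) : x \in S_ K i -> y \in S_ K i.+1 -> x \subset y ->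
  B_adj K i x y && B_adj K i y x.
Proof. by rewrite /B_adj => -> -> ->; rewrite orbT. Qed.

Lemma hexagon_cycle (a b c : W) (A : {set W}) :
  A \subset F -> #|A| = i -> [&& a \in F, b \in F & c \in F] ->
  a \notin A -> b \notin A -> c \notin A -> [&& a != b, b != c & c != a] ->
  cycle (B_adj K i) (hexagon a b c A).
Proof.
move=> AF cardA /and3P [aF bF cF] aA bA cA /and3P [ab bc ca].
have square x y : x \in F -> y \in F -> x \notin A -> y \notin A -> x != y ->
    B_adj K i (x |: A) (x |: (y |: A)) && B_adj K i (x |: (y |: A)) (y |: A).
  move=> xF yF xA yA xy.
  have xyA : x \notin y |: A by rewrite !inE negb_or xy.
  have face_i z : z \in F -> z \notin A -> z |: A \in S_ K i.
    move=> zF zA; have zAF : z |: A \subset F by rewrite subUset sub1set zF.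
    by rewrite inE subsets_in_K // cardsU1 zA add1n cardA eqxx.
  have face_i1 : x |: (y |: A) \in S_ K i.+1.
    have xyAF : x |: (y |: A) \subset F by rewrite !subUset !sub1set xF yF.
    by rewrite inE subsets_in_K // cardsU1 xyA cardsU1 yA !add1n cardA eqxx.
  have [xy1 _] := andP (B_adj_sub (face_i x xF xA) face_i1 (setUS _ (subsetUr _ _))).
  have [_ xy2] := andP (B_adj_sub (face_i y yF yA) face_i1 (subsetUr _ _)).
  by rewrite xy1 xy2.
case/andP: (square a b aF bF aA bA ab) => ab1 ab2.
case/andP: (square b c bF cF bA cA bc) => bc1 bc2.
case/andP: (square c a cF aF cA aA ca) => ca1 ca2.
by rewrite /= ab1 ab2 bc1 bc2 ca1 ca2.
Qed.

Lemma B_unbalanced_of_simplex eps : (i.+3 <= #|F|)%N -> ~ B_balanced K i eps.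
Proof.
case/card_geqP=> s [uniq_s size_s sub_s] balK.
case: s uniq_s size_s sub_s => [|a [|b [|c t]]] // uniq_s size_s sub_s.
set A := [set:: t].
move: uniq_s; rewrite /= !inE !negb_or => /and4P [/and3P [ab ac aA] /andP [bc bA] cA uniq_t].
have notinA x : x \notin t -> x \notin A by rewrite inE.
have cardA : #|A| = i by rewrite cardsE (card_uniqP uniq_t); case: size_s.
have AF : A \subset F.
  by apply/subsetP=> x; rewrite inE => xt; apply: sub_s; rewrite !inE xt !orbT.
have inF : [&& a \in F, b \in F & c \in F] by rewrite !sub_s // !inE eqxx ?orbT.
have distinct : [&& a != b, b != c & c != a] by rewrite ab bc eq_sym ac.
have := balK _ (hexagon_uniq (notinA _ aA) (notinA _ bA) (notinA _ cA) distinct) isT.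
move=> /(_ (hexagon_cycle AF cardA inF (notinA _ aA) (notinA _ bA) (notinA _ cA) distinct)).
by rewrite hexagon_cycle_sign ?notinA.
Qed.

End HexagonInSimplex.

Lemma k_wedge_sum_simplex (V1 V2 W : finType) (k : nat) (K1 : {set {set V1}})
    (K2 : {set {set V2}}) (K : {set {set W}}) :
  simplicial_complex K1 -> k_wedge_sum k K1 K2 K ->
  exists2 F : {set W}, #|F| = k.+1 & forall G : {set W}, G \subset F -> G \in K.
Proof.
move=> cK1 [phi1 [phi2 [s1 [s2 [[inj1 _ s1K _] [_ _ ->]]]]]].
move: s1K; rewrite inE => /andP [s1K /eqP card_s1].
exists (phi1 @: s1); first by rewrite card_imset.
move=> G GF; rewrite inE; apply/orP; left.
have -> : G = phi1 @: [set x in s1 | phi1 x \in G].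
  apply/setP=> w; apply/idP/imsetP => [wG | [x]]; last by rewrite inE => /andP [_ xG] ->.
  by have /imsetP [x xs1 wx] := subsetP GF w wG; exists x; rewrite // inE xs1 -wx.
by apply/imset_f/(cK1 s1) => //; apply/subsetP=> x /[!inE] /andP [].
Qed.

Theorem mainTheorem7 (V1 V2 W : finType) (K1 : {set {set V1}})
    (K2 : {set {set V2}}) (K : {set {set W}}) (k i : nat) :
  simplicial_complex K1 -> simplicial_complex K2 ->
  k_wedge_sum k K1 K2 K ->
  (2 <= k)%N -> (i <= k - 2)%N ->
  forall eps : {set W} -> bool, ~ B_balanced K i eps.
Proof.
move=> cK1 _ wedge k_ge2 i_le eps.
have [F card_F subsets_in_K] := k_wedge_sum_simplex cK1 wedge.
by apply: (B_unbalanced_of_simplex subsets_in_K); rewrite card_F; lia.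
Qed.
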